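(* Let $\mathcal C$ be a braided monoidal category, $\mathcal C_0$ a full braided monoidal subcategory, $C$ a $\mathcal C_0$-generated coalgebra in $\mathcal C$, and $\omega:\mathcal C_0^C\to\mathcal C$ the forgetful functor. Then $\mathrm{Nat}_{\mathcal C_0}(\omega,\omega\otimes -):\mathcal C\to\mathrm{Set}$ is representable and $C\cong\mathrm{coend}_{\mathcal C_0}(\omega)$ as coalgebras in $\mathcal C$.
   Context: A coalgebra $C$ in $\mathcal C$ is $\mathcal C_0$-generated if (1) $C$ is the colimit in $\mathcal C$ of a diagram of objects $C_i\in\mathcal C_0$ with injections $\iota_i:C_i\to C$; (2) all $X\otimes\iota_i\otimes M$ ($X\in\mathcal C_0$, $M\in\mathcal C$) are monomorphisms; (3) each $C_i$ is a subcoalgebra of $C$ via $\iota_i$; (4) for every $C$-comodule $(P,\delta_P)$ with $P\in\mathcal C_0$ there are $i$ and $\delta_{P,i}:P\to P\otimes C_i$ with $(1\otimes\iota_i)\delta_{P,i}=\delta_P$. $\mathcal C_0^C$ is the category of $C$-comodules with underlying object in $\mathcal C_0$, a $\mathcal C_0$-category via $X\otimes(P,\delta)=(X\otimes P,1_X\otimes\delta)$. $\mathrm{Nat}_{\mathcal C_0}(\omega,\omega\otimes M)$ is the set of natural transformations $\varphi:\omega\to\omega\otimes M$ with $\varphi(X\otimes P)=1_X\otimes\varphi(P)$ for all $X\in\mathcal C_0$. $\mathrm{coend}_{\mathcal C_0}(\omega)$ is the representing object, with coalgebra structure determined by the universal morphism $\delta$ via $(1\otimes\Delta)\delta=(\delta\otimes1)\delta$,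 $(1\otimes\varepsilon)\delta=$ canonical isomorphism. *)

Set Implicit Arguments.
Unset Strict Implicit.

Record Category : Type := {
  ob : Type;
  hom : ob -> ob -> Type;
  idm : forall A : ob, hom A A;
  comp : forall A B C : ob, hom B C -> hom A B -> hom A C;
  comp_idl : forall A B (f : hom A B), comp (idm B) f = f;
  comp_idr : forall A B (f : hom A B), comp f (idm A) = f;
  comp_assoc : forall A B C D (h : hom C D) (g : hom B C) (f : hom A B),
      comp h (comp g f) = comp (comp h g) f }.

Arguments hom {c} _ _.
Arguments idm {c} _.
Arguments comp {c A B C} _ _.

Notation "g ∘ f" := (comp g f) (at level 40, left associativity).

Definition Mono (K : Category) (A B : ob K) (m : hom A B) : Prop :=
  forall (Z : ob K) (f g : hom Z A), m ∘ f = m ∘ g -> f = g.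

Record Functor (J K : Category) : Type := {
  fobj : ob J -> ob K;
  fmap : forall a b : ob J, hom a b -> hom (fobj a) (fobj b);
  fmap_id : forall a, fmap (idm a) = idm (fobj a);
  fmap_comp : forall a b c (g : hom b c) (f : hom a b),
      fmap (g ∘ f) = fmap g ∘ fmap f }.

Arguments fobj {J K} _ _.
Arguments fmap {J K} _ {a b} _.

Definition IsColimit (J K : Category) (D : Functor J K) (L : ob K)
    (iota : forall j : ob J, hom (fobj D j) L) : Prop :=
  (forall (a b : ob J) (u : hom a b), iota b ∘ fmap D u = iota a) /\
  (forall (Z : ob K) (f : forall j : ob J, hom (fobj D j) Z),
      (forall (a b : ob J) (u : hom a b), f b ∘ fmap D u = f a) ->
      exists! h : hom L Z, forall j, h ∘ iota j = f j).

Record BMData (K : Category) : Type := {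
  tens : ob K -> ob K -> ob K;
  tensm : forall A B A' B' : ob K, hom A A' -> hom B B' -> hom (tens A B) (tens A' B');
  munit : ob K;
  assoc : forall A B C : ob K, hom (tens (tens A B) C) (tens A (tens B C));
  associ : forall A B C : ob K, hom (tens A (tens B C)) (tens (tens A B) C);
  lu : forall A : ob K, hom (tens munit A) A;
  lui : forall A : ob K, hom A (tens munit A);
  ru : forall A : ob K, hom (tens A munit) A;
  rui : forall A : ob K, hom A (tens A munit);
  br : forall A B : ob K, hom (tens A B) (tens B A);
  bri : forall A B : ob K, hom (tens B A) (tens A B) }.

Arguments tens {K} _ _ _.
Arguments tensm {K} _ {A B A' B'} _ _.
Arguments munit {K} _.
Arguments assoc {K} _ _ _ _.
Arguments associ {K} _ _ _ _.
Arguments lu {K} _ _.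
Arguments lui {K} _ _.
Arguments ru {K} _ _.
Arguments rui {K} _ _.
Arguments br {K} _ _ _.
Arguments bri {K} _ _ _.

Record IsBraidedMonoidal (K : Category) (M : BMData K) : Prop := {
  tensm_id : forall A B : ob K, tensm M (idm A) (idm B) = idm (tens M A B);
  tensm_comp : forall (A B C A' B' C' : ob K) (f : hom A B) (g : hom B C)
      (f' : hom A' B') (g' : hom B' C'),
      tensm M (g ∘ f) (g' ∘ f') = tensm M g g' ∘ tensm M f f';
  assoc_iso1 : forall A B C, associ M A B C ∘ assoc M A B C = idm _;
  assoc_iso2 : forall A B C, assoc M A B C ∘ associ M A B C = idm _;
  assoc_nat : forall (A B C A' B' C' : ob K) (f : hom A A') (g : hom B B') (h : hom C C'),
      assoc M A' B' C' ∘ tensm M (tensm M f g) h = tensm M f (tensm M g h) ∘ assoc M A B C;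
  lu_iso1 : forall A, lui M A ∘ lu M A = idm _;
  lu_iso2 : forall A, lu M A ∘ lui M A = idm _;
  lu_nat : forall (A B : ob K) (f : hom A B), lu M B ∘ tensm M (idm (munit M)) f = f ∘ lu M A;
  ru_iso1 : forall A, rui M A ∘ ru M A = idm _;
  ru_iso2 : forall A, ru M A ∘ rui M A = idm _;
  ru_nat : forall (A B : ob K) (f : hom A B), ru M B ∘ tensm M f (idm (munit M)) = f ∘ ru M A;
  pentagon : forall A B C D : ob K,
      assoc M A B (tens M C D) ∘ assoc M (tens M A B) C D
      = tensm M (idm A) (assoc M B C D) ∘ (assoc M A (tens M B C) D ∘ tensm M (assoc M A B C) (idm D));
  triangle : forall A B : ob K,
      tensm M (idm A) (lu M B) ∘ assoc M A (munit M) B = tensm M (ru M A) (idm B);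
  br_iso1 : forall A B, bri M A B ∘ br M A B = idm _;
  br_iso2 : forall A B, br M A B ∘ bri M A B = idm _;
  br_nat : forall (A B A' B' : ob K) (f : hom A A') (g : hom B B'),
      br M A' B' ∘ tensm M f g = tensm M g f ∘ br M A B;
  hexagon1 : forall A B C : ob K,
      assoc M B C A ∘ (br M A (tens M B C) ∘ assoc M A B C)
      = tensm M (idm B) (br M A C) ∘ (assoc M B A C ∘ tensm M (br M A B) (idm C));
  hexagon2 : forall A B C : ob K,
      associ M C A B ∘ (br M (tens M A B) C ∘ associ M A B C)
      = tensm M (br M A C) (idm B) ∘ (associ M A C B ∘ tensm M (idm A) (br M B C)) }.

Definition FullMonoidalSub (K : Category) (M : BMData K) (C0 : ob K -> Prop) : Prop :=
  C0 (munit M) /\ (forall X Y, C0 X -> C0 Y -> C0 (tens M X Y)).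
Arguments FullMonoidalSub {K} M C0.

Definition IsCoalgebra (K : Category) (M : BMData K) (C : ob K)
    (Delta : hom C (tens M C C)) (eps : hom C (munit M)) : Prop :=
  assoc M C C C ∘ (tensm M Delta (idm C) ∘ Delta) = tensm M (idm C) Delta ∘ Delta /\
  lu M C ∘ (tensm M eps (idm C) ∘ Delta) = idm C /\
  ru M C ∘ (tensm M (idm C) eps ∘ Delta) = idm C.
Arguments IsCoalgebra {K} M {C} Delta eps.

Definition IsCoalgMorphism (K : Category) (M : BMData K) (C D : ob K)
    (DC : hom C (tens M C C)) (eC : hom C (munit M))
    (DD : hom D (tens M D D)) (eD : hom D (munit M)) (f : hom C D) : Prop :=
  tensm M f f ∘ DC = DD ∘ f /\ eD ∘ f = eC.
Arguments IsCoalgMorphism {K} M {C D} DC eC DD eD f.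

Definition IsComodule (K : Category) (M : BMData K) (C : ob K)
    (Delta : hom C (tens M C C)) (eps : hom C (munit M))
    (P : ob K) (delta : hom P (tens M P C)) : Prop :=
  assoc M P C C ∘ (tensm M delta (idm C) ∘ delta) = tensm M (idm P) Delta ∘ delta /\
  ru M P ∘ (tensm M (idm P) eps ∘ delta) = idm P.
Arguments IsComodule {K} M {C} Delta eps {P} delta.

Definition IsComodMap (K : Category) (M : BMData K) (C P Q : ob K)
    (dP : hom P (tens M P C)) (dQ : hom Q (tens M Q C)) (f : hom P Q) : Prop :=
  dQ ∘ f = tensm M f (idm C) ∘ dP.
Arguments IsComodMap {K} M {C P Q} dP dQ f.

Definition C0Generated (K : Category) (M : BMData K) (C0 : ob K -> Prop) (C : ob K)
    (Delta : hom C (tens M C C)) (eps : hom C (munit M)) : Prop :=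
  exists (J : Category) (D : Functor J K) (iota : forall j : ob J, hom (fobj D j) C),
    (forall j, C0 (fobj D j)) /\
    @IsColimit J K D C iota /\
    (forall (j : ob J) (X N : ob K), C0 X ->
        Mono (tensm M (tensm M (idm X) (iota j)) (idm N))) /\
    (forall j : ob J, exists (Dj : hom (fobj D j) (tens M (fobj D j) (fobj D j)))
                             (ej : hom (fobj D j) (munit M)),
        IsCoalgebra M Dj ej /\
        IsCoalgMorphism M Dj ej Delta eps (iota j)) /\
    (forall (P : ob K) (delta : hom P (tens M P C)),
        C0 P -> IsComodule M Delta eps delta ->
        exists (j : ob J) (dj : hom P (tens M P (fobj D j))),
          tensm M (idm P) (iota j) ∘ dj = delta).
Arguments C0Generated {K} M C0 {C} Delta eps.

(** A family indexed by the objects (P, delta) of C0^C (the proof arguments are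
    forced to be irrelevant by naturality along identities). *)
Definition NatFam (K : Category) (M : BMData K) (C0 : ob K -> Prop) (C : ob K)
    (Delta : hom C (tens M C C)) (eps : hom C (munit M)) (N : ob K) : Type :=
  forall (P : ob K) (delta : hom P (tens M P C)),
    IsComodule M Delta eps delta -> C0 P -> hom P (tens M P N).
Arguments NatFam {K} M C0 {C} Delta eps N.

Definition IsNatC0 (K : Category) (M : BMData K) (C0 : ob K -> Prop) (C : ob K)
    (Delta : hom C (tens M C C)) (eps : hom C (munit M)) (N : ob K)
    (phi : NatFam M C0 Delta eps N) : Prop :=
  (forall (P Q : ob K) (dP : hom P (tens M P C)) (dQ : hom Q (tens M Q C))
          (hP : IsComodule M Delta eps dP) (cP : C0 P)
          (hQ : IsComodule M Delta eps dQ) (cQ : C0 Q) (f : hom P Q),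
      IsComodMap M dP dQ f ->
      tensm M f (idm N) ∘ phi P dP hP cP = phi Q dQ hQ cQ ∘ f) /\
  (* C0-linearity: phi(X (x) P) = 1_X (x) phi(P), where X (x) (P, delta)
     is (X (x) P, 1_X (x) delta) (with the associator inserted) *)
  (forall (X P : ob K) (dP : hom P (tens M P C))
          (hP : IsComodule M Delta eps dP) (cP : C0 P) (cX : C0 X)
          (hXP : IsComodule M Delta eps (associ M X P C ∘ tensm M (idm X) dP))
          (cXP : C0 (tens M X P)),
      phi (tens M X P) (associ M X P C ∘ tensm M (idm X) dP) hXP cXP
      = associ M X P N ∘ tensm M (idm X) (phi P dP hP cP)).
Arguments IsNatC0 {K} M C0 {C} Delta eps {N} phi.

Definition RepresentsNatC0 (K : Category) (M : BMData K) (C0 : ob K -> Prop) (C : ob K)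
    (Delta : hom C (tens M C C)) (eps : hom C (munit M)) (E : ob K)
    (Theta : forall N : ob K, hom E N -> NatFam M C0 Delta eps N) : Prop :=
  (forall (N : ob K) (f : hom E N), IsNatC0 M C0 Delta eps (Theta N f)) /\
  (forall (N N' : ob K) (f : hom E N) (g : hom N N') P dP hP cP,
      Theta N' (g ∘ f) P dP hP cP = tensm M (idm P) g ∘ Theta N f P dP hP cP) /\
  (forall (N : ob K) (f f' : hom E N),
      (forall P dP hP cP, Theta N f P dP hP cP = Theta N f' P dP hP cP) -> f = f') /\
  (forall (N : ob K) (phi : NatFam M C0 Delta eps N), IsNatC0 M C0 Delta eps phi ->
      exists f : hom E N, forall P dP hP cP, Theta N f P dP hP cP = phi P dP hP cP).
Arguments RepresentsNatC0 {K} M C0 {C} Delta eps {E} Theta.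

Definition CoendCoalgStructure (K : Category) (M : BMData K) (C0 : ob K -> Prop) (C : ob K)
    (Delta : hom C (tens M C C)) (eps : hom C (munit M)) (E : ob K)
    (delta : NatFam M C0 Delta eps E)
    (DE : hom E (tens M E E)) (eE : hom E (munit M)) : Prop :=
  (forall P dP hP cP,
      tensm M (idm P) DE ∘ delta P dP hP cP
      = assoc M P E E ∘ (tensm M (delta P dP hP cP) (idm E) ∘ delta P dP hP cP)) /\
  (forall P dP hP cP,
      tensm M (idm P) eE ∘ delta P dP hP cP = rui M P).
Arguments CoendCoalgStructure {K} M C0 {C} Delta eps {E} delta DE eE.

Definition CoalgIso (K : Category) (M : BMData K) (C D : ob K)
    (DC : hom C (tens M C C)) (eC : hom C (munit M))
    (DD : hom D (tens M D D)) (eD : hom D (munit M)) : Prop :=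
  exists (f : hom C D) (g : hom D C),
    g ∘ f = idm C /\ f ∘ g = idm D /\ IsCoalgMorphism M DC eC DD eD f.
Arguments CoalgIso {K} M {C D} DC eC DD eD.

(* A comodule [(P, δ)] with [P] in [C0] factors as [δ = (1 ⊗ ι_i) δ_i] through a
   subcoalgebra [C_i], so a [C0]-natural [φ : ω -> ω ⊗ N] is determined by its values
   on the comodules [C_i]: applying the counit of [C_i] to [φ(C_i)] gives maps
   [f_i : C_i -> N], which form a cocone by naturality and glue to [f : C -> N].
   Naturality along [δ_i : P -> P ⊗ C_i] and [C0]-linearity then give
   [φ(P) = (1 ⊗ f) δ].  Thus [f ↦ (1 ⊗ f) δ] represents [Nat_C0(ω, ω ⊗ -)], any other
   representing object is isomorphic to [C] by Yoneda, and the isomorphism carries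
   [(Δ, ε)] to the coalgebra structure of the coend. *)
From Stdlib Require Import ClassicalEpsilon ChoiceFacts.
Set Implicit Arguments.
Unset Strict Implicit.

Lemma eq_comp_r (K : Category) (A B C : ob K) (g : hom B C) (f : hom A B) (h : hom A C) :
  g ∘ f = h -> forall (X : ob K) (x : hom X A), g ∘ (f ∘ x) = h ∘ x.
Proof. intros E X x. rewrite comp_assoc, E. reflexivity. Qed.

Lemma split_mono_cancel (K : Category) (A B Z : ob K) (i : hom A B) (r : hom B A)
    (f g : hom Z A) :
  r ∘ i = idm A -> i ∘ f = i ∘ g -> f = g.
Proof.
  intros Hri E. rewrite <- (comp_idl f), <- (comp_idl g), <- Hri, <- !comp_assoc, E.
  reflexivity.
Qed.

Lemma split_epi_cancel (K : Category) (A B Z : ob K) (p : hom A B) (s : hom B A)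
    (f g : hom B Z) :
  p ∘ s = idm B -> f ∘ p = g ∘ p -> f = g.
Proof.
  intros Hps E. rewrite <- (comp_idr f), <- (comp_idr g), <- Hps, !comp_assoc, E.
  reflexivity.
Qed.

Lemma colimit_hom_ext (J K : Category) (D : Functor J K) (L : ob K)
    (iota : forall j : ob J, hom (fobj D j) L) (Z : ob K) (h h' : hom L Z) :
  IsColimit iota -> (forall j, h ∘ iota j = h' ∘ iota j) -> h = h'.
Proof.
  intros [Hcocone Huniv] E.
  destruct (Huniv Z (fun j => h ∘ iota j)) as [u [_ Hu]].
  { intros a b v. rewrite <- comp_assoc, Hcocone. reflexivity. }
  transitivity u; [symmetry |]; apply Hu; intro j; [reflexivity | symmetry; apply E].
Qed.

Section Monoidal.
Variables (K : Category) (M : BMData K).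
Hypothesis HM : IsBraidedMonoidal M.
Local Notation "f ⊗ g" := (tensm M f g) (at level 33, left associativity).
Local Notation I := (munit M).

Lemma comp_tensm (A B C A' B' C' : ob K) (f : hom A B) (g : hom B C) (f' : hom A' B')
    (g' : hom B' C') :
  (g ⊗ g') ∘ (f ⊗ f') = (g ∘ f) ⊗ (g' ∘ f').
Proof. symmetry; apply (tensm_comp HM). Qed.

Lemma tensm_id_comp (D A B C : ob K) (f : hom A B) (g : hom B C) :
  idm D ⊗ (g ∘ f) = (idm D ⊗ g) ∘ (idm D ⊗ f).
Proof. rewrite comp_tensm, comp_idl. reflexivity. Qed.

Lemma tensm_split_l (A B A' B' : ob K) (f : hom A A') (g : hom B B') :
  f ⊗ g = (f ⊗ idm B') ∘ (idm A ⊗ g).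
Proof. rewrite comp_tensm, comp_idl, comp_idr. reflexivity. Qed.

Lemma tensm_split_r (A B A' B' : ob K) (f : hom A A') (g : hom B B') :
  f ⊗ g = (idm A' ⊗ g) ∘ (f ⊗ idm B).
Proof. rewrite comp_tensm, comp_idl, comp_idr. reflexivity. Qed.

(* Composites are kept right-associated; [rewrite_r E] rewrites with [E : g ∘ f = _]
   inside such a chain, and [tensor_norm] fuses adjacent tensors and drops identities. *)
Tactic Notation "rewrite_r" uconstr(E) :=
  rewrite (eq_comp_r E); repeat rewrite <- comp_assoc.
Tactic Notation "rewrite_r" "<-" uconstr(E) :=
  rewrite (eq_comp_r (eq_sym E)); repeat rewrite <- comp_assoc.

Ltac tensor_norm :=
  repeat first
    [ rewrite <- comp_assoc
    | rewrite comp_tensm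
    | rewrite (eq_comp_r (comp_tensm _ _ _ _))
    | rewrite comp_idl
    | rewrite comp_idr
    | rewrite (tensm_id HM) ].

Lemma associ_nat (A B C A' B' C' : ob K) (f : hom A A') (g : hom B B') (h : hom C C') :
  associ M A' B' C' ∘ (f ⊗ (g ⊗ h)) = ((f ⊗ g) ⊗ h) ∘ associ M A B C.
Proof.
  apply (split_epi_cancel (assoc_iso2 HM A B C)).
  rewrite <- comp_assoc, <- (assoc_nat HM), comp_assoc, (assoc_iso1 HM), comp_idl.
  rewrite <- comp_assoc, (assoc_iso1 HM), comp_idr. reflexivity.
Qed.

Lemma lui_nat (A B : ob K) (f : hom A B) : lui M B ∘ f = (idm I ⊗ f) ∘ lui M A.
Proof.
  apply (split_mono_cancel (i := lu M B) (r := lui M B)); [apply (lu_iso1 HM) |].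
  rewrite comp_assoc, (lu_iso2 HM), comp_idl, comp_assoc, (lu_nat HM), <- comp_assoc,
    (lu_iso2 HM), comp_idr.
  reflexivity.
Qed.

Lemma tensm_idI_inj (A B : ob K) (f g : hom A B) : f ⊗ idm I = g ⊗ idm I -> f = g.
Proof.
  intro E.
  assert (Hconj : forall h : hom A B, h = ru M B ∘ (h ⊗ idm I) ∘ rui M A).
  { intro h. rewrite (ru_nat HM), <- comp_assoc, (ru_iso2 HM), comp_idr. reflexivity. }
  rewrite (Hconj f), (Hconj g), E. reflexivity.
Qed.

(* Kelly's coherence lemma: the right unitor of [A ⊗ B] is determined by that of [B]. *)
Lemma ru_tens (A B : ob K) : (idm A ⊗ ru M B) ∘ assoc M A B I = ru M (tens M A B).
Proof.
  apply tensm_idI_inj.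
  apply (split_mono_cancel (i := assoc M A B I) (r := associ M A B I));
    [apply (assoc_iso1 HM) |].
  rewrite <- (triangle HM (tens M A B) I), <- (tensm_id HM A B).
  rewrite comp_assoc, (assoc_nat HM), <- comp_assoc, (pentagon HM A B I I).
  rewrite comp_assoc, comp_tensm, comp_assoc, (triangle HM).
  rewrite comp_idl, <- (assoc_nat HM), <- comp_assoc, comp_tensm, comp_idl. reflexivity.
Qed.

Lemma ru_tens_associ (A B : ob K) :
  ru M (tens M A B) ∘ associ M A B I = idm A ⊗ ru M B.
Proof. rewrite <- ru_tens, <- comp_assoc, (assoc_iso2 HM), comp_idr. reflexivity. Qed.

Lemma triangle_associ (A B : ob K) :
  (ru M A ⊗ idm B) ∘ associ M A I B = idm A ⊗ lu M B.
Proof. rewrite <- (triangle HM), <- comp_assoc, (assoc_iso2 HM), comp_idr. reflexivity. Qed.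

Lemma pentagon_associ (A B C D : ob K) :
  assoc M (tens M A B) C D ∘ (associ M A B C ⊗ idm D)
  = associ M A B (tens M C D) ∘ ((idm A ⊗ assoc M B C D) ∘ assoc M A (tens M B C) D).
Proof.
  apply (split_mono_cancel (i := assoc M A B (tens M C D)) (r := associ M A B (tens M C D)));
    [apply (assoc_iso1 HM) |].
  rewrite comp_assoc, (pentagon HM), <- !comp_assoc, comp_tensm, (assoc_iso2 HM), comp_idl,
    (tensm_id HM), comp_idr, comp_assoc, (assoc_iso2 HM), comp_idl.
  reflexivity.
Qed.

Lemma mono_tensm_unit (A B N : ob K) (f : hom A B) :
  Mono ((idm I ⊗ f) ⊗ idm N) -> Mono (f ⊗ idm N).
Proof.
  intros Hmono Z g g' E.
  apply (split_mono_cancel (i := lui M A ⊗ idm N) (r := lu M A ⊗ idm N)).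
  { rewrite comp_tensm, (lu_iso2 HM), comp_idl, (tensm_id HM). reflexivity. }
  apply Hmono.
  assert (Hswap : ((idm I ⊗ f) ⊗ idm N) ∘ (lui M A ⊗ idm N) = (lui M B ⊗ idm N) ∘ (f ⊗ idm N)).
  { rewrite !comp_tensm, lui_nat. reflexivity. }
  rewrite !comp_assoc, Hswap, <- !comp_assoc, E. reflexivity.
Qed.


Lemma coalg_counit_extract (C N : ob K) (Delta : hom C (tens M C C)) (eps : hom C I)
    (g : hom C N) :
  IsCoalgebra M Delta eps -> lu M N ∘ ((eps ⊗ idm N) ∘ ((idm C ⊗ g) ∘ Delta)) = g.
Proof.
  intros [_ [Hcounit _]]. tensor_norm.
  rewrite (tensm_split_r eps g).
  repeat rewrite <- comp_assoc.
  rewrite_r (lu_nat HM _).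
  rewrite Hcounit, comp_idr. reflexivity.
Qed.

Section Coalgebra.
Variables (C : ob K) (Delta : hom C (tens M C C)) (eps : hom C I).

Lemma comodule_tens_l (X P : ob K) (dP : hom P (tens M P C)) :
  IsComodule M Delta eps dP -> IsComodule M Delta eps (associ M X P C ∘ (idm X ⊗ dP)).
Proof.
  intros [Hcoassoc Hcounit]. split.
  - rewrite (tensm_split_r (associ M X P C ∘ (idm X ⊗ dP)) (idm C)), (tensm_id HM), comp_idl.
    rewrite <- (comp_idl (idm C)), <- comp_tensm.
    repeat rewrite <- comp_assoc.
    rewrite_r <- (associ_nat _ _ _).
    rewrite_r (pentagon_associ _ _ _ _).
    rewrite_r (assoc_iso2 HM _ _ _).
    tensor_norm.
    rewrite Hcoassoc, <- (tensm_id HM X P), tensm_id_comp.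
    rewrite_r (associ_nat _ _ _).
    reflexivity.
  - rewrite <- (tensm_id HM X P).
    repeat rewrite <- comp_assoc.
    rewrite_r <- (associ_nat _ _ _).
    rewrite_r (ru_tens_associ _ _).
    tensor_norm. rewrite Hcounit, (tensm_id HM). reflexivity.
Qed.

Lemma comodule_of_subcoalgebra (Cj : ob K) (i : hom Cj C) (Dj : hom Cj (tens M Cj Cj))
    (ej : hom Cj I) :
  IsCoalgebra M Dj ej -> IsCoalgMorphism M Dj ej Delta eps i ->
  IsComodule M Delta eps ((idm Cj ⊗ i) ∘ Dj).
Proof.
  intros [Hcoassoc [_ Hcounit]] [Hcomul Heps]. split.
  - transitivity (assoc M Cj C C ∘ (((idm Cj ⊗ i) ⊗ i) ∘ ((Dj ⊗ idm Cj) ∘ Dj)));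
      [tensor_norm; reflexivity |].
    rewrite_r (assoc_nat HM _ _ _).
    rewrite Hcoassoc. tensor_norm. rewrite Hcomul. reflexivity.
  - tensor_norm. rewrite Heps, Hcounit. reflexivity.
Qed.

Lemma comodule_counit_rui (P : ob K) (dP : hom P (tens M P C)) :
  IsComodule M Delta eps dP -> (idm P ⊗ eps) ∘ dP = rui M P.
Proof.
  intros [_ Hcounit].
  apply (split_mono_cancel (i := ru M P) (r := rui M P)); [apply (ru_iso1 HM) |].
  rewrite Hcounit, (ru_iso2 HM). reflexivity.
Qed.

Lemma comodule_coassoc_comp (P N : ob K) (dP : hom P (tens M P C)) (f : hom C N) :
  IsComodule M Delta eps dP ->
  (idm P ⊗ ((f ⊗ f) ∘ Delta)) ∘ dP
  = assoc M P N N ∘ ((((idm P ⊗ f) ∘ dP) ⊗ idm N) ∘ ((idm P ⊗ f) ∘ dP)).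
Proof.
  intros [Hcoassoc _].
  transitivity (assoc M P N N ∘ (((idm P ⊗ f) ⊗ f) ∘ ((dP ⊗ idm C) ∘ dP)));
    [| tensor_norm; reflexivity].
  rewrite_r (assoc_nat HM _ _ _).
  rewrite Hcoassoc. tensor_norm. reflexivity.
Qed.

Lemma coalg_morphism_conj (E : ob K) (a : hom C E) (b : hom E C) :
  b ∘ a = idm C -> IsCoalgMorphism M Delta eps ((a ⊗ a) ∘ (Delta ∘ b)) (eps ∘ b) a.
Proof.
  intros Hba. split; rewrite <- !comp_assoc, Hba, comp_idr; reflexivity.
Qed.

Lemma coalgebra_of_split_epi_morphism (E : ob K) (DE : hom E (tens M E E)) (eE : hom E I)
    (a : hom C E) (b : hom E C) :
  IsCoalgebra M Delta eps -> a ∘ b = idm E -> IsCoalgMorphism M Delta eps DE eE a ->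
  IsCoalgebra M DE eE.
Proof.
  intros [Hcoassoc [Hcounit_l Hcounit_r]] Hab [Hcomul Heps].
  split; [| split]; apply (split_epi_cancel Hab);
    repeat rewrite <- comp_assoc; rewrite <- Hcomul; tensor_norm; rewrite ?Heps.
  - transitivity (assoc M E E E ∘ (((a ⊗ a) ⊗ a) ∘ ((Delta ⊗ idm C) ∘ Delta)));
      [rewrite <- Hcomul; tensor_norm; reflexivity |].
    rewrite_r (assoc_nat HM _ _ _).
    rewrite Hcoassoc. tensor_norm. rewrite <- Hcomul. reflexivity.
  - rewrite (tensm_split_r eps a).
    repeat rewrite <- comp_assoc.
    rewrite_r (lu_nat HM _).
    rewrite Hcounit_l, comp_idr. reflexivity.
  - rewrite (tensm_split_l a eps).
    repeat rewrite <- comp_assoc.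
    rewrite_r (ru_nat HM _).
    rewrite Hcounit_r, comp_idr. reflexivity.
Qed.

Variable C0 : ob K -> Prop.

Definition nat_of_hom (N : ob K) (f : hom C N) : NatFam M C0 Delta eps N :=
  fun P dP _ _ => (idm P ⊗ f) ∘ dP.
Arguments nat_of_hom [N] f P delta _ _.

Lemma nat_of_hom_natural (N : ob K) (f : hom C N) : IsNatC0 M C0 Delta eps (nat_of_hom f).
Proof.
  unfold nat_of_hom. split.
  - intros P Q dP dQ hP cP hQ cQ g Hg. unfold IsComodMap in Hg.
    repeat rewrite <- comp_assoc. rewrite Hg. tensor_norm. reflexivity.
  - intros X P dP hP cP cX hXP cXP.
    rewrite <- (tensm_id HM X P).
    rewrite_r <- (associ_nat _ _ _).
    tensor_norm. reflexivity.
Qed.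

Section Presentation.
Hypothesis HC0 : FullMonoidalSub M C0.
Variables (J : Category) (D : Functor J K) (iota : forall j : ob J, hom (fobj D j) C).
Variables (Dsub : forall j : ob J, hom (fobj D j) (tens M (fobj D j) (fobj D j)))
  (esub : forall j : ob J, hom (fobj D j) I).
Hypothesis HD0 : forall j, C0 (fobj D j).
Hypothesis Hcolim : IsColimit iota.
Hypothesis Hmono : forall (j : ob J) (X N : ob K), C0 X ->
  Mono ((idm X ⊗ iota j) ⊗ idm N).
Hypothesis Hsub_coalg : forall j, IsCoalgebra M (Dsub j) (esub j).
Hypothesis Hsub_mor : forall j, IsCoalgMorphism M (Dsub j) (esub j) Delta eps (iota j).
Hypothesis Hfactor : forall (P : ob K) (dP : hom P (tens M P C)),
  C0 P -> IsComodule M Delta eps dP ->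
  exists (j : ob J) (dj : hom P (tens M P (fobj D j))), (idm P ⊗ iota j) ∘ dj = dP.

Definition sub_coaction (j : ob J) : hom (fobj D j) (tens M (fobj D j) C) :=
  (idm (fobj D j) ⊗ iota j) ∘ Dsub j.

Lemma sub_coaction_comodule (j : ob J) : IsComodule M Delta eps (sub_coaction j).
Proof. exact (comodule_of_subcoalgebra (Hsub_coalg j) (Hsub_mor j)). Qed.

(* The [j]-th leg of the morphism [C -> N] that will represent [phi]. *)
Definition component (N : ob K) (phi : NatFam M C0 Delta eps N) (j : ob J) :
    hom (fobj D j) N :=
  lu M N ∘ ((esub j ⊗ idm N) ∘ phi _ (sub_coaction j) (sub_coaction_comodule j) (HD0 j)).

Lemma component_nat_of_hom (N : ob K) (f : hom C N) (j : ob J) :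
  component (nat_of_hom f) j = f ∘ iota j.
Proof.
  etransitivity; [| apply coalg_counit_extract, Hsub_coalg].
  unfold component, nat_of_hom, sub_coaction. tensor_norm. reflexivity.
Qed.

Lemma nat_of_hom_inj (N : ob K) (f f' : hom C N) :
  (forall P dP hP cP, nat_of_hom f P dP hP cP = nat_of_hom f' P dP hP cP) -> f = f'.
Proof.
  intros E. apply (colimit_hom_ext Hcolim). intro j.
  rewrite <- !component_nat_of_hom. unfold component. rewrite E. reflexivity.
Qed.

Lemma fmap_comod_map (a b : ob J) (u : hom a b) :
  IsComodMap M (sub_coaction a) (sub_coaction b) (fmap D u).
Proof.
  destruct Hcolim as [Hcocone _].
  apply (mono_tensm_unit (Hmono (proj1 HC0))).
  unfold sub_coaction. tensor_norm.
  rewrite (eq_comp_r (proj1 (Hsub_mor b))), <- comp_assoc, !Hcocone, (proj1 (Hsub_mor a)).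
  reflexivity.
Qed.

Lemma component_cocone (N : ob K) (phi : NatFam M C0 Delta eps N) :
  IsNatC0 M C0 Delta eps phi ->
  forall (a b : ob J) (u : hom a b), component phi b ∘ fmap D u = component phi a.
Proof.
  intros [Hnat _] a b u.
  unfold component. repeat rewrite <- comp_assoc.
  rewrite <- (Hnat _ _ _ _ (sub_coaction_comodule a) (HD0 a) (sub_coaction_comodule b) (HD0 b)
    _ (fmap_comod_map u)).
  tensor_norm.
  rewrite <- (proj2 (Hsub_mor b)), <- comp_assoc, (proj1 Hcolim), (proj2 (Hsub_mor a)).
  reflexivity.
Qed.

Section Factorization.
Variables (P : ob K) (dP : hom P (tens M P C)) (j : ob J) (dj : hom P (tens M P (fobj D j))).
Hypotheses (hP : IsComodule M Delta eps dP) (cP : C0 P).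
Hypothesis Hdj : (idm P ⊗ iota j) ∘ dj = dP.

Lemma factor_counit : ru M P ∘ ((idm P ⊗ esub j) ∘ dj) = idm P.
Proof.
  rewrite <- (proj2 hP) at 2. rewrite <- Hdj. tensor_norm.
  rewrite (proj2 (Hsub_mor j)). reflexivity.
Qed.

Lemma factor_comod_map :
  IsComodMap M dP (associ M P (fobj D j) C ∘ (idm P ⊗ sub_coaction j)) dj.
Proof.
  apply (Hmono (j := j) (N := C) cP). unfold sub_coaction.
  transitivity ((dP ⊗ idm C) ∘ dP); [| rewrite <- Hdj; tensor_norm; reflexivity].
  repeat rewrite <- comp_assoc.
  rewrite_r <- (associ_nat _ _ _).
  tensor_norm.
  rewrite (proj1 (Hsub_mor j)), tensm_id_comp, <- comp_assoc, Hdj,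
    <- (proj1 hP), (eq_comp_r (assoc_iso1 HM _ _ _)), comp_idl.
  reflexivity.
Qed.

(* Naturality along [dj], C0-linearity for [P ⊗ C_j], then the triangle axiom. *)
Lemma nat_factor (N : ob K) (phi : NatFam M C0 Delta eps N) :
  IsNatC0 M C0 Delta eps phi -> phi P dP hP cP = (idm P ⊗ component phi j) ∘ dj.
Proof.
  intros [Hnat Hlin].
  pose proof (comodule_tens_l P (sub_coaction_comodule j)) as hPj.
  pose proof (proj2 HC0 _ _ cP (HD0 j)) as cPj.
  transitivity ((ru M P ⊗ idm N) ∘
    (((idm P ⊗ esub j) ⊗ idm N) ∘ ((dj ⊗ idm N) ∘ phi P dP hP cP))).
  { tensor_norm. rewrite factor_counit, (tensm_id HM), comp_idl. reflexivity. }
  rewrite (Hnat _ _ _ _ hP cP hPj cPj _ factor_comod_map),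
    (Hlin P _ _ (sub_coaction_comodule j) (HD0 j) cP hPj cPj).
  repeat rewrite <- comp_assoc.
  rewrite_r <- (associ_nat _ _ _).
  rewrite_r (triangle_associ _ _).
  unfold component. tensor_norm. reflexivity.
Qed.

End Factorization.

Lemma nat_of_hom_surj (N : ob K) (phi : NatFam M C0 Delta eps N) :
  IsNatC0 M C0 Delta eps phi ->
  exists f : hom C N, forall P dP hP cP, nat_of_hom f P dP hP cP = phi P dP hP cP.
Proof.
  intros Hphi.
  destruct (proj2 Hcolim N (component phi) (component_cocone Hphi)) as [f [Hf _]].
  exists f. intros P dP hP cP.
  destruct (Hfactor cP hP) as [j [dj Hdj]].
  unfold nat_of_hom. rewrite (nat_factor hP cP Hdj Hphi), <- Hdj, <- Hf.
  tensor_norm. reflexivity.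
Qed.

Lemma nat_of_hom_represents_presented : RepresentsNatC0 M C0 Delta eps nat_of_hom.
Proof.
  split; [| split; [| split]].
  - exact nat_of_hom_natural.
  - intros. unfold nat_of_hom. tensor_norm. reflexivity.
  - exact nat_of_hom_inj.
  - exact nat_of_hom_surj.
Qed.

End Presentation.

Lemma nat_of_hom_represents :
  FullMonoidalSub M C0 -> C0Generated M C0 Delta eps ->
  RepresentsNatC0 M C0 Delta eps nat_of_hom.
Proof.
  intros HC0 [J [D [iota [HD0 [Hcolim [Hmono [Hsub Hfactor]]]]]]].
  pose proof (non_dep_dep_functional_choice choice) as dep_choice.
  destruct (dep_choice _ (fun j => hom (fobj D j) (tens M (fobj D j) (fobj D j))) _ Hsub)
    as [Dsub HDsub].
  destruct (dep_choice _ (fun j => hom (fobj D j) I) _ HDsub) as [esub Hesub].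
  exact (nat_of_hom_represents_presented HC0 HD0 Hcolim Hmono
    (fun j => proj1 (Hesub j)) (fun j => proj2 (Hesub j)) Hfactor).
Qed.

Lemma representations_iso (E E' : ob K)
    (Theta : forall N : ob K, hom E N -> NatFam M C0 Delta eps N)
    (Theta' : forall N : ob K, hom E' N -> NatFam M C0 Delta eps N) :
  RepresentsNatC0 M C0 Delta eps Theta -> RepresentsNatC0 M C0 Delta eps Theta' ->
  exists (a : hom E E') (b : hom E' E),
    b ∘ a = idm E /\ a ∘ b = idm E' /\
    forall P dP hP cP, Theta' E' (idm E') P dP hP cP = Theta E' a P dP hP cP.
Proof.
  intros [Hnat [Hcomp [Hinj Hsurj]]] [Hnat' [Hcomp' [Hinj' Hsurj']]].
  destruct (Hsurj E' (Theta' E' (idm E')) (Hnat' _ _)) as [a Ha].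
  destruct (Hsurj' E (Theta E (idm E)) (Hnat _ _)) as [b Hb].
  exists a, b. split; [| split].
  - apply Hinj. intros.
    rewrite Hcomp, Ha, <- Hcomp', comp_idr, Hb. reflexivity.
  - apply Hinj'. intros.
    rewrite Hcomp', Hb, <- Hcomp, comp_idr, Ha. reflexivity.
  - intros. symmetry. apply Ha.
Qed.

Lemma coend_structure_iff (E : ob K) (delta : NatFam M C0 Delta eps E) (a : hom C E)
    (DE : hom E (tens M E E)) (eE : hom E I) :
  FullMonoidalSub M C0 -> C0Generated M C0 Delta eps ->
  (forall P dP hP cP, delta P dP hP cP = (idm P ⊗ a) ∘ dP) ->
  CoendCoalgStructure M C0 Delta eps delta DE eE <-> IsCoalgMorphism M Delta eps DE eE a.
Proof.
  intros HC0 Hgen Ha.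
  destruct (nat_of_hom_represents HC0 Hgen) as [_ [_ [Hinj _]]].
  split.
  - intros [Hcomul Hcounit]. split; apply Hinj; intros P dP hP cP; unfold nat_of_hom.
    + rewrite (comodule_coassoc_comp _ hP), tensm_id_comp, <- comp_assoc, <- !(Ha P dP hP cP), Hcomul.
      reflexivity.
    + rewrite tensm_id_comp, <- comp_assoc, <- (Ha P dP hP cP), Hcounit, (comodule_counit_rui hP).
      reflexivity.
  - intros [Hcomul Hcounit]. split; intros P dP hP cP; rewrite !Ha, comp_assoc,
      <- tensm_id_comp.
    + rewrite <- Hcomul, (comodule_coassoc_comp _ hP). reflexivity.
    + rewrite Hcounit, (comodule_counit_rui hP). reflexivity.
Qed.

End Coalgebra.
End Monoidal.

Theorem corollary4p3 (K : Category) (M : BMData K) (HM : IsBraidedMonoidal M)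
    (C0 : ob K -> Prop) (HC0 : FullMonoidalSub M C0)
    (C : ob K) (Delta : hom C (tens M C C)) (eps : hom C (munit M))
    (Hcoalg : IsCoalgebra M Delta eps)
    (Hgen : C0Generated M C0 Delta eps) :
  (exists (E : ob K) (Theta : forall N : ob K, hom E N -> NatFam M C0 Delta eps N),
      RepresentsNatC0 M C0 Delta eps Theta) /\
  (forall (E : ob K) (Theta : forall N : ob K, hom E N -> NatFam M C0 Delta eps N),
      RepresentsNatC0 M C0 Delta eps Theta ->
      (exists (DE : hom E (tens M E E)) (eE : hom E (munit M)),
          CoendCoalgStructure M C0 Delta eps (Theta E (idm E)) DE eE) /\
      (forall (DE : hom E (tens M E E)) (eE : hom E (munit M)),
          CoendCoalgStructure M C0 Delta eps (Theta E (idm E)) DE eE ->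
          IsCoalgebra M DE eE /\ CoalgIso M Delta eps DE eE)).
Proof.
  pose proof (nat_of_hom_represents HM HC0 Hgen) as Hrep.
  split; [exists C; eexists; exact Hrep |].
  intros E Theta HTheta.
  destruct (representations_iso Hrep HTheta) as [a [b [Hba [Hab Ha]]]].
  split.
  - exists (tensm M a a ∘ (Delta ∘ b)), (eps ∘ b).
    apply (coend_structure_iff HM _ _ HC0 Hgen Ha).
    apply coalg_morphism_conj, Hba.
  - intros DE eE Hcoend.
    apply (coend_structure_iff HM _ _ HC0 Hgen Ha) in Hcoend.
    split.
    + exact (coalgebra_of_split_epi_morphism HM Hcoalg Hab Hcoend).
    + exists a, b. auto.
Qed.
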